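(* Let $\mathcal{G}_D=(\mathcal{V}_D,\mathcal{E}_D)$ be a connected finite undirected graph with $n$ nodes, $m$ edges, and a set of $n_g$ source nodes $\mathcal{V}_g\subset\mathcal{V}_D$, the remaining nodes being sinks. Let supplies $g_i>0$ ($i\in\mathcal{V}_g$, zero otherwise), demands $d_j>0$ ($j\notin\mathcal{V}_g$, zero otherwise) with $\sum_i g_i=\sum_j d_j$, and capacities $\bar{x}_{i,j}\ge0$ on edges be given. Call a set $\mathcal{S}$ of directed edges a feasible distribution configuration if each element of $\mathcal{S}$ is an orientation of an edge of $\mathcal{E}_D$, the directed graph $(\mathcal{V}_D,\mathcal{S})$ is a polyforest (its underlying undirected graph is a forest), and there exist flows $x_{i,j}>0$, $(i\to j)\in\mathcal{S}$, with $x_{i,j}\le\bar{x}_{i,j}$ and $\sum_{(k\to j)\in\mathcal{S}}x_{k,j}-\sum_{(i\to k)\in\mathcal{S}}x_{i,k}=g_k-d_k$ for every node $k$. Then the number of feasible distribution configurations is at most $\det(\mathcal{L}'(\mathcal{G}_D))$, where $\mathcal{L}'(\mathcal{G}_D)$ is a cofactor of the Laplacian matrix of $\mathcal{G}_D$ (the Laplacian with one row and the corresponding column deleted).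
   Context: A polyforest is a directed acyclic graph whose underlying undirected graph is a forest. The Laplacian of $\mathcal{G}_D$ is $D-A$ with $D$ the degree matrix and $A$ the adjacency matrix. *)

From HB Require Import structures.
From mathcomp Require Import all_boot all_order all_algebra.
From mathcomp Require Import boolp.
Set Implicit Arguments. Unset Strict Implicit. Unset Printing Implicit Defensive.
Import Order.TTheory GRing.Theory Num.Theory.
Local Open Scope ring_scope.

(* Nodes of G_D are 'I_n.+1.  The undirected simple graph G_D is given by a
   symmetric irreflexive relation e. *)

Definition laplacian (n : nat) (e : rel 'I_n.+1) : 'M[int]_n.+1 :=
  \matrix_(i, j) (if i == j then (#|[set k | e i k]|)%:Z else - ((e i j : nat)%:Z)).

Definition laplacian_cofactor (n : nat) (e : rel 'I_n.+1) (r : 'I_n.+1)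
  : 'M[int]_n := row' r (col' r (laplacian e)).

Definition dir_rel (T : finType) (S : {set T * T}) : rel T :=
  fun x y => (x, y) \in S.
Definition underlying_rel (T : finType) (S : {set T * T}) : rel T :=
  fun x y => ((x, y) \in S) || ((y, x) \in S).

(* (T, S) is acyclic as a directed graph: no directed cycle (loops and
   2-cycles included). *)
Definition is_dag (T : finType) (S : {set T * T}) : Prop :=
  forall p : seq T, uniq p -> (0 < size p)%N -> ~~ cycle (dir_rel S) p.

Definition is_forest (T : finType) (u : rel T) : Prop :=
  forall p : seq T, uniq p -> (2 < size p)%N -> ~~ cycle u p.

Definition polyforest (T : finType) (S : {set T * T}) : Prop :=
  is_dag S /\ is_forest (underlying_rel S).

Definition feasible_config (R : realFieldType) (n : nat) (e : rel 'I_n.+1)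
  (g d : 'I_n.+1 -> R) (xbar : 'I_n.+1 -> 'I_n.+1 -> R)
  (S : {set 'I_n.+1 * 'I_n.+1}) : Prop :=
  [/\ (forall p, p \in S -> e p.1 p.2),
      polyforest S &
      exists x : 'I_n.+1 -> 'I_n.+1 -> R,
        (forall i j, (i, j) \in S -> 0 < x i j /\ x i j <= xbar i j) /\
        (forall k, \sum_(j | (j, k) \in S) x j k - \sum_(j | (k, j) \in S) x k j
                   = g k - d k)].

Definition feasible_configs (R : realFieldType) (n : nat) (e : rel 'I_n.+1)
  (g d : 'I_n.+1 -> R) (xbar : 'I_n.+1 -> 'I_n.+1 -> R)
  : {set {set 'I_n.+1 * 'I_n.+1}} :=
  [set S | `[< feasible_config e g d xbar S >]].

From HB Require Import structures.
From mathcomp Require Import all_boot all_order all_algebra all_fingroup.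
From mathcomp Require Import boolp.
Set Implicit Arguments. Unset Strict Implicit. Unset Printing Implicit Defensive.
Import Order.TTheory GRing.Theory Num.Theory.
Local Open Scope ring_scope.

(* The reduced incidence matrix B of G_D (rows: the vertices other than r;
   columns: the edges, oriented from the smaller to the larger endpoint)
   satisfies B B^T = L', so by Cauchy-Binet det L' is the sum of the squares of
   the maximal minors of B, hence at least the number of n-sets S of edges with
   det B_S <> 0.
   A feasible configuration C with flows x gives the vector y of net flows
   along the edges, and conservation reads B y = d - g.  The support of y lies
   in the edge set of the forest underlying C, and columns of B indexed by the
   edges of a forest are independent, since a kernel vector supported on a
   forest would have no leaf in its support.  Extend this edge set to a basis
   S.  As B_S is invertible, y is the only solution of B y = d - g supported on
   S, and C is read off the signs of y: distinct configurations get distinct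
   bases. *)

Lemma imset_ord_inj (T : finType) n (f : 'I_n -> T) :
  #|[set f i | i in 'I_n]| = n -> injective f.
Proof.
move=> card_f; have /imset_injP f_inj : #|[set f i | i in 'I_n]| == #|'I_n|.
  by rewrite card_f card_ord.
by move=> i j; apply: f_inj.
Qed.

Section EnumNth.
Variables (T : finType) (t0 : T) (n : nat) (S : {set T}).
Hypothesis cardS : #|S| = n.

Lemma size_enum_set : size (enum S) = n.
Proof. by rewrite -cardE. Qed.

Lemma mem_enum_nth (j : 'I_n) : nth t0 (enum S) j \in S.
Proof. by rewrite -mem_enum mem_nth // size_enum_set. Qed.

Lemma enum_nth_inj : injective (fun j : 'I_n => nth t0 (enum S) j).
Proof.
move=> i j /eqP; rewrite nth_uniq ?size_enum_set ?enum_uniq //.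
by move/eqP/val_inj.
Qed.

Lemma enum_nthP p : p \in S -> exists j : 'I_n, nth t0 (enum S) j = p.
Proof.
move=> pS; have lt_pn : (index p (enum S) < n)%N.
  by rewrite -size_enum_set index_mem mem_enum.
by exists (Ordinal lt_pn); rewrite /= nth_index ?mem_enum.
Qed.

End EnumNth.

Section CauchyBinet.
Variables (R : comNzRingType) (T : finType) (t0 : T) (n : nat).
Variable b : 'I_n -> T -> R.

Definition colmx (f : 'I_n -> T) : 'M[R]_n := \matrix_(i, j) b i (f j).

Definition col_minor (S : {set T}) : R :=
  \det (colmx (fun j => nth t0 (enum S) j)).

Lemma det_gram_expand :
  \det (\matrix_(i, j) \sum_p b i p * b j p) =
  \sum_(f : {ffun 'I_n -> T}) (\prod_i b i (f i)) * \det (colmx f).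
Proof.
rewrite /(\det _).
transitivity (\sum_(s : 'S_n) \sum_(f : {ffun 'I_n -> T})
   (-1) ^+ s * \prod_i (b i (f i) * b (s i) (f i))).
  apply: eq_bigr => s _; rewrite -big_distrr /=; congr (_ * _).
  rewrite -(bigA_distr_bigA (fun i p => b i p * b (s i) p)) /=.
  by apply: eq_bigr => i _; rewrite mxE.
rewrite exchange_big; apply: eq_bigr => f _.
rewrite -det_tr /(\det _) big_distrr /=; apply: eq_bigr => s _.
rewrite big_split /= mulrCA; congr (_ * (_ * _)).
by apply: eq_bigr => i _; rewrite !mxE.
Qed.

Lemma det_colmx_noninj (f : 'I_n -> T) : ~~ injectiveb f -> \det (colmx f) = 0.
Proof.
case/injectivePn => i1 [i2 neq_i12 eq_f12].
by rewrite -det_tr (determinant_alternate neq_i12) // => j; rewrite !mxE eq_f12.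
Qed.

Section FixedImage.
Variables (S : {set T}) (cardS : #|S| = n).
Let h (j : 'I_n) : T := nth t0 (enum S) j.

Lemma ffun_image_enum_nth (f : {ffun 'I_n -> T}) :
  [set f i | i in 'I_n] = S -> exists s : 'S_n, forall i, f i = h (s i).
Proof.
move=> imf; pose s0 i := odflt i [pick j | h j == f i].
have s0K i : h (s0 i) = f i.
  have /(enum_nthP t0 cardS) [j hj] : f i \in S by rewrite -imf imset_f.
  by rewrite /s0; case: pickP => [j' /eqP //|/(_ j)]; rewrite /h hj eqxx.
have f_inj : injective f by apply: imset_ord_inj; rewrite imf.
have s0_inj : injective s0 by move=> i j /(congr1 h); rewrite !s0K => /f_inj.
by exists (perm s0_inj) => i; rewrite permE s0K.
Qed.

Lemma sum_det_colmx_image :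
  \sum_(f : {ffun 'I_n -> T} | [set f i | i in 'I_n] == S)
     (\prod_i b i (f i)) * \det (colmx f) = col_minor S ^+ 2.
Proof.
pose phi (s : 'S_n) : {ffun 'I_n -> T} := [ffun i => h (s i)].
have phi_inj : injective phi.
  move=> s1 s2 /ffunP eq12; apply/permP => i.
  by have := eq12 i; rewrite !ffunE => /(enum_nth_inj cardS).
have imphi : [pred f : {ffun 'I_n -> T} | [set f i | i in 'I_n] == S] =i
             [set phi s | s in 'S_n].
  move=> f; rewrite !inE; apply/eqP/imsetP => [/ffun_image_enum_nth [s fs]|].
    by exists s; rewrite ?inE //; apply/ffunP => i; rewrite ffunE fs.
  case=> s _ ->; apply/setP => p; apply/imsetP/idP => [[i _ ->]|pS].
    by rewrite ffunE mem_enum_nth.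
  have [j hj] := enum_nthP t0 cardS pS.
  by exists ((s^-1)%g j); rewrite // ffunE permKV /h hj.
rewrite (eq_bigl _ _ imphi) big_imset /=; last by move=> ? ? _ _ /phi_inj.
have colmx_phi s : colmx (phi s) = col_perm s (colmx h).
  by apply/matrixP => i j; rewrite !mxE ffunE.
rewrite expr2 /col_minor -/h {2}/(\det _) big_distrr /=.
apply: eq_bigr => s _; rewrite colmx_phi col_permE det_mulmx det_perm odd_permV.
have -> : \prod_i b i (phi s i) = \prod_i colmx h i (s i).
  by apply: eq_bigr => i _; rewrite ffunE mxE.
by rewrite mulrC mulrA.
Qed.
End FixedImage.

Theorem cauchy_binet_gram :
  \det (\matrix_(i, j) \sum_p b i p * b j p) =
  \sum_(S : {set T} | #|S| == n) col_minor S ^+ 2.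
Proof.
rewrite det_gram_expand (bigID (fun f : {ffun 'I_n -> T} => injectiveb f)) /=.
rewrite [X in _ + X]big1 ?addr0; last first.
  by move=> f /det_colmx_noninj ->; rewrite mulr0.
rewrite (partition_big (fun f : {ffun 'I_n -> T} => [set f i | i in 'I_n])
                       (fun S : {set T} => #|S| == n)) /=; last first.
  by move=> f /injectiveP f_inj; rewrite card_imset ?card_ord.
apply: eq_bigr => S /eqP cardS; rewrite -sum_det_colmx_image //.
apply: eq_bigl => f; case: eqP => [imf|]; rewrite ?andbF ?andbT //.
by apply/injectiveP/imset_ord_inj; rewrite imf.
Qed.

End CauchyBinet.

Lemma col_minor_map (R S : comNzRingType) (f : {rmorphism R -> S}) (T : finType) (t0 : T)
    n (b : 'I_n -> T -> R) (b' : 'I_n -> T -> S) (U : {set T}) :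
  (forall i p, b' i p = f (b i p)) -> col_minor t0 b' U = f (col_minor t0 b U).
Proof.
move=> def_b'; rewrite /col_minor -det_map_mx; congr (\det _).
by apply/matrixP => i j; rewrite !mxE.
Qed.

Lemma left_kernel_neq0 (F : fieldType) m k (A : 'M[F]_(m, k)) :
  (k < m)%N -> exists2 v : 'rV_m, v != 0 & v *m A = 0.
Proof.
move=> lt_km; have : kermx A != 0.
  rewrite kermx_eq0 /row_free; apply: contraTneq lt_km => <-.
  by rewrite -leqNgt rank_leq_col.
by case/rowV0Pn => v /sub_kermxP vA nz_v; exists v.
Qed.

Section Pushforward.
Variables (R : nzSemiRingType) (T : finType) (k : nat) (h : 'I_k -> T).

Definition pushforward (w : 'I_k -> R) (p : T) : R := \sum_(j | h j == p) w j.

Lemma sum_mul_pushforward (c : T -> R) (w : 'I_k -> R) :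
  \sum_p c p * pushforward w p = \sum_j c (h j) * w j.
Proof.
under eq_bigr do rewrite big_distrr /=.
rewrite (exchange_big_dep xpredT) //=; apply: eq_bigr => j _.
by rewrite (big_pred1 (h j)) // => p /=; rewrite eq_sym.
Qed.

Lemma pushforward_inj (w : 'I_k -> R) j : injective h -> pushforward w (h j) = w j.
Proof. by move=> h_inj; apply: big_pred1 => j' /=; rewrite (inj_eq h_inj). Qed.

Lemma pushforward_notin (w : 'I_k -> R) p : p \notin codom h -> pushforward w p = 0.
Proof.
by move=> p_out; apply: big_pred0 => j; apply: contraNF p_out => /eqP <-; rewrite codom_f.
Qed.

End Pushforward.

Section FreeColumns.
Variables (F : fieldType) (T : finType) (n : nat) (b : 'I_n -> T -> F).

Definition free_cols (U : {set T}) : Prop :=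
  forall z : T -> F, (forall p, p \notin U -> z p = 0) ->
    (forall i, \sum_p b i p * z p = 0) -> forall p, z p = 0.

Lemma free_cols_card U : free_cols U -> (#|U| <= n)%N.
Proof.
move=> freeU; rewrite leqNgt; apply/negP => lt_nU.
pose A := \matrix_(j < #|U|, i < n) b i (enum_val j).
have [v nz_v vA] := left_kernel_neq0 A lt_nU.
pose z := pushforward enum_val (v 0).
have z0 : forall p, z p = 0.
  apply: freeU => [p pU|i].
    apply: pushforward_notin; apply: contra pU => /codomP [j ->].
    exact: enum_valP.
  transitivity ((v *m A) 0 i); last by rewrite vA mxE.
  by rewrite /z sum_mul_pushforward mxE; apply: eq_bigr => j _; rewrite mxE mulrC.
apply/negP: nz_v; rewrite negbK; apply/eqP/rowP => j; rewrite mxE.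
by rewrite -(z0 (enum_val j)) /z pushforward_inj //; apply: enum_val_inj.
Qed.

Section Extension.
Hypothesis row_free_b :
  forall v : 'rV[F]_n, (forall p, \sum_i v 0 i * b i p = 0) -> v = 0.

Lemma free_cols_add U : free_cols U -> (#|U| < n)%N ->
  exists2 p, p \notin U & free_cols (p |: U).
Proof.
move=> freeU lt_Un.
pose A := \matrix_(i < n, j < #|U|) b i (enum_val j).
have [v nz_v vA] := left_kernel_neq0 A lt_Un.
pose c p := \sum_i v 0 i * b i p.
have cU q : q \in U -> c q = 0.
  move=> qU; transitivity ((v *m A) 0 (enum_rank_in qU q)); last by rewrite vA mxE.
  by rewrite mxE; apply: eq_bigr => i _; rewrite mxE enum_rankK_in.
have [p cp] : exists p, c p != 0.
  apply/existsP; apply: contraNT nz_v => /existsPn c0.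
  by apply/eqP/row_free_b => p; apply/eqP; rewrite -[_ == 0]negbK c0.
have pU : p \notin U by apply: contra cp => /cU ->.
exists p => // z zpU Bz.
have zU q : q != p -> q \notin U -> z q = 0.
  by move=> qp qU; apply: zpU; rewrite !inE negb_or qp.
have zp : z p = 0.
  have : \sum_q c q * z q = 0.
    rewrite /c; under eq_bigr do rewrite big_distrl /=.
    rewrite exchange_big big1 // => i _.
    by under eq_bigr do rewrite -mulrA; rewrite -big_distrr /= Bz mulr0.
  rewrite (bigD1 p) //= big1 ?addr0 => [/eqP|q qp].
    by rewrite mulf_eq0 (negbTE cp) => /eqP.
  by case: (boolP (q \in U)) => qU; [rewrite cU ?mul0r | rewrite zU ?mulr0].
apply: freeU => // q qU; case: (eqVneq q p) => [->//|qp]; exact: zU.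
Qed.

Lemma free_cols_extend U : free_cols U ->
  exists2 S : {set T}, U \subset S & #|S| = n /\ free_cols S.
Proof.
move=> freeU; move: {2}(n - #|U|)%N (erefl (n - #|U|)%N) => k.
elim: k U freeU => [|k IHk] U freeU def_k.
  exists U => //; split => //; apply/eqP; rewrite eqn_leq free_cols_card //=.
  by rewrite -subn_eq0 def_k.
have lt_Un : (#|U| < n)%N by rewrite -subn_gt0 def_k.
have [p pU freepU] := free_cols_add freeU lt_Un.
have [|S sub_pUS freeS] := IHk _ freepU.
  by rewrite cardsU1 pU add1n subnS def_k.
by exists S => //; apply: subset_trans sub_pUS; apply: subsetUr.
Qed.

End Extension.

Lemma free_cols_minor (t0 : T) (S : {set T}) :
  #|S| = n -> free_cols S <-> col_minor t0 b S != 0.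
Proof.
move=> cardS; pose h (j : 'I_n) := nth t0 (enum S) j.
have h_inj : injective h := enum_nth_inj cardS.
rewrite /col_minor -det_tr; split => [freeS | det_neq0 z zS Bz].
  apply/det0P => -[v nz_v vM]; apply/negP: nz_v; rewrite negbK.
  pose z := pushforward h (v 0).
  have z0 : forall p, z p = 0.
    apply: freeS => [p pS|i].
      apply: pushforward_notin; apply: contra pS => /codomP [j ->].
      exact: mem_enum_nth.
    transitivity ((v *m (\matrix_(i, j) b i (h j))^T) 0 i); last by rewrite vM mxE.
    by rewrite /z sum_mul_pushforward mxE; apply: eq_bigr => j _; rewrite !mxE mulrC.
  by apply/eqP/rowP => j; rewrite mxE -(z0 (h j)) /z pushforward_inj.
pose w := \row_j z (h j).
have w0 : w = 0.
  apply/eqP; apply: contraNT det_neq0 => nz_w; apply/det0P; exists w => //.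
  apply/rowP => i; transitivity (\sum_p b i p * z p); last by rewrite Bz mxE.
  rewrite mxE [RHS](bigID (mem S)) /= [X in _ + X]big1 ?addr0.
  - rewrite -[RHS]big_enum /= [RHS](big_nth t0) [RHS]big_mkord (size_enum_set cardS).
    by apply: eq_bigr => j _; rewrite !mxE mulrC.
  - by move=> p /zS ->; rewrite mulr0.
move=> p; case: (boolP (p \in S)) => [pS|]; last exact: zS.
have [j <-] := enum_nthP t0 cardS pS.
by have := congr1 (fun M : 'rV[F]_n => M 0 j) w0; rewrite !mxE.
Qed.

Lemma free_cols_eq U (z1 z2 : T -> F) : free_cols U ->
  (forall p, p \notin U -> z1 p = 0) -> (forall p, p \notin U -> z2 p = 0) ->
  (forall i, \sum_p b i p * z1 p = \sum_p b i p * z2 p) -> z1 =1 z2.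
Proof.
move=> freeU z1U z2U Bz p; apply/eqP; rewrite -subr_eq0; apply/eqP.
apply: (freeU (fun p => z1 p - z2 p)) => [q qU|i]; first by rewrite z1U ?z2U ?subrr.
by under eq_bigr do rewrite mulrBr; rewrite sumrB Bz subrr.
Qed.

End FreeColumns.

Lemma sum_eq_natr_mul (R : nzSemiRingType) (I : finType) (u : I) (F : I -> R) :
  \sum_a (u == a)%:R * F a = F u.
Proof.
rewrite (bigD1 u) //= eqxx mul1r big1 ?addr0 // => a /negbTE.
by rewrite eq_sym => ->; rewrite mul0r.
Qed.

Section Incidence.
Variables (R : nzRingType) (n : nat) (e : rel 'I_n.+1).
Local Notation V := 'I_n.+1.

(* Columns are indexed by all pairs of vertices; the nonzero ones are the pairs
   (a, c) with a < c and e a c, one for each edge of the graph. *)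
Definition incidence (u : V) (p : V * V) : R :=
  if (p.1 < p.2)%N && e p.1 p.2 then (u == p.1)%:R - (u == p.2)%:R else 0.

Definition edge_supported (z : V * V -> R) : Prop :=
  forall a c, z (a, c) != 0 -> (a < c)%N && e a c.

Lemma incidence_mul_sum (z : V * V -> R) u : edge_supported z ->
  \sum_p incidence u p * z p = \sum_c z (u, c) - \sum_c z (c, u).
Proof.
move=> supp_z.
have inc_z a c : incidence u (a, c) * z (a, c) = ((u == a)%:R - (u == c)%:R) * z (a, c).
  rewrite /incidence /=; case: ifP => // /negbT not_edge.
  by have [->|/supp_z] := eqVneq (z (a, c)) 0; rewrite ?mulr0 // (negbTE not_edge).
rewrite (eq_bigr (fun p => ((u == p.1)%:R - (u == p.2)%:R) * z (p.1, p.2))); last first.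
  by case=> a c _; rewrite inc_z.
rewrite -(pair_bigA _ (fun a c => ((u == a)%:R - (u == c)%:R) * z (a, c))) /=.
under eq_bigr do under eq_bigr do rewrite mulrBl.
under eq_bigr do rewrite sumrB.
rewrite sumrB; congr (_ - _).
  rewrite -(sum_eq_natr_mul u (fun a => \sum_c z (a, c))).
  by apply: eq_bigr => a _; rewrite big_distrr.
rewrite exchange_big -(sum_eq_natr_mul u (fun c => \sum_a z (a, c))).
by apply: eq_bigr => c _; rewrite big_distrr.
Qed.

Lemma sum_incidence p : \sum_u incidence u p = 0.
Proof.
rewrite /incidence; case: (_ && _); last by rewrite big1.
have sum1 a : \sum_u (u == a)%:R = 1 :> R.
  by rewrite (bigD1 a) //= eqxx big1 ?addr0 // => u /negbTE ->.
by rewrite sumrB !sum1 subrr.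
Qed.

Lemma reduced_incidence_kernel (r : V) (z : V * V -> R) :
  (forall i, \sum_p incidence (lift r i) p * z p = 0) ->
  forall u, \sum_p incidence u p * z p = 0.
Proof.
move=> Bz u; have : \sum_u \sum_p incidence u p * z p = 0.
  by rewrite exchange_big big1 // => p _; rewrite -big_distrl /= sum_incidence mul0r.
rewrite (bigD1_ord r) //= [X in _ + X]big1 ?addr0 => [Br|i _]; last exact: Bz.
by case: (unliftP r u) => [i ->|->].
Qed.

Hypotheses (e_sym : symmetric e) (e_conn : forall x y, connect e x y).

Lemma reduced_incidence_row_free (r : V) (v : 'rV[R]_n) :
  (forall p, \sum_i v 0 i * incidence (lift r i) p = 0) -> v = 0.
Proof.
move=> vB; pose phi := pushforward (lift r) (v 0).
have sum_lift a : \sum_i v 0 i * (lift r i == a)%:R = phi a.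
  rewrite /phi /pushforward [RHS]big_mkcond; apply: eq_bigr => i _.
  by case: eqP; rewrite ?mulr1 ?mulr0.
have phi_edge a c : e a c -> phi a = phi c.
  wlog lt_ac : a c / (a < c)%N.
    move=> wlog_lt eac; case: (ltngtP a c) => [lt_ac|lt_ca|/val_inj -> //].
      exact: wlog_lt.
    by rewrite (wlog_lt c a lt_ca) // e_sym.
  move=> eac; apply/eqP; rewrite -subr_eq0 -!sum_lift -sumrB; apply/eqP.
  rewrite -[RHS](vB (a, c)); apply: eq_bigr => i _.
  by rewrite /incidence /= lt_ac eac mulrBr.
have phi_closed : closed e [pred u | phi u == phi r].
  by move=> x y /phi_edge exy; rewrite !inE exy.
have phi_r : phi r = 0.
  by apply: pushforward_notin; apply/codomP => -[i /eqP]; rewrite (negbTE (neq_lift r i)).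
apply/rowP => i; rewrite mxE -(pushforward_inj _ _ (@lift_inj _ r)) -/phi.
have := closed_connect phi_closed (e_conn r (lift r i)).
by rewrite !inE eqxx phi_r => /esym/eqP.
Qed.

End Incidence.

Arguments incidence {R n} e u p.

Lemma incidence_map (R S : nzRingType) (f : {rmorphism R -> S}) n (e : rel 'I_n.+1) u p :
  f (incidence e u p) = incidence e u p.
Proof. by rewrite /incidence; case: ifP; rewrite ?rmorph0 ?rmorphB ?rmorph_nat. Qed.

Section Laplacian.
Variables (n : nat) (e : rel 'I_n.+1).
Hypotheses (e_sym : symmetric e) (e_irr : irreflexive e).

Lemma incidence_edge_supported w : edge_supported e (incidence e w : _ -> int).
Proof. by move=> a c; rewrite /incidence /=; case: ifP; rewrite ?eqxx. Qed.

Lemma incidence_sub_swap (w u c : 'I_n.+1) :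
  incidence e w (u, c) - incidence e w (c, u) =
  (e u c)%:R * ((w == u)%:R - (w == c)%:R) :> int.
Proof.
rewrite /incidence /= (e_sym c u).
case: (ltngtP u c) => [_|_|/val_inj <-]; case: (e u c) => //=;
  by rewrite ?subr0 ?sub0r ?opprB ?mul1r ?mul0r ?subrr ?mulr0.
Qed.

Lemma incidence_gram u w :
  \sum_p incidence e u p * incidence e w p = laplacian e u w.
Proof.
rewrite incidence_mul_sum; last exact: incidence_edge_supported.
have deg_u : \sum_c (e u c)%:R = #|[set k | e u k]|%:R :> int.
  rewrite -sum1_card natr_sum [RHS]big_mkcond; apply: eq_bigr => c _.
  by rewrite inE; case: (e u c).
rewrite -sumrB; under eq_bigr do rewrite incidence_sub_swap mulrBr.
rewrite sumrB -big_distrl /= deg_u.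
under [X in _ - X]eq_bigr do rewrite mulrC.
rewrite sum_eq_natr_mul mxE eq_sym; case: eqP => [<-|_].
  by rewrite e_irr mulr1 subr0 natz.
by rewrite mulr0 sub0r natz.
Qed.

End Laplacian.

Lemma sub_forest (T : finType) (u u' : rel T) :
  subrel u u' -> is_forest u' -> is_forest u.
Proof.
by move=> sub_uu' forest p up sp; apply: contra (forest p up sp); apply: sub_cycle.
Qed.

Section NoLeafCycle.
Variables (T : finType) (adj : rel T).
Hypotheses (adj_sym : symmetric adj) (adj_irr : irreflexive adj).
Hypothesis no_leaf : forall u w, adj u w -> exists2 w', w' != w & adj u w'.
Hypothesis forest : is_forest adj.

Lemma walk_extend v u q : uniq [:: v, u & q] -> path adj v (u :: q) ->
  exists w, uniq [:: w, v, u & q] && path adj w [:: v, u & q].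
Proof.
move=> uniq_vuq path_vuq; have /andP [vu _] := path_vuq.
have [w neq_wu vw] := no_leaf vu; exists w.
have [wq | wNq] := boolP (w \in q).
  case/splitPr: wq uniq_vuq path_vuq => q1 q2 uniq_vuq path_vuq; exfalso.
  have uniq_cyc : uniq [:: v, u & rcons q1 w].
    by move: uniq_vuq; rewrite -cat_rcons -!cat_cons cat_uniq => /andP [].
  have path_cyc : path adj v (u :: rcons q1 w).
    by move: path_vuq; rewrite -cat_rcons -cat_cons cat_path => /andP [].
  have := forest uniq_cyc; rewrite /= size_rcons => /(_ isT) /negP; apply.
  case/andP: path_cyc => _ path_uq1; rewrite rcons_path; apply/and3P; split => //.
  by rewrite last_rcons adj_sym.
apply/andP; split; last by rewrite -[path _ _ _]/(adj w v && _) adj_sym vw.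
rewrite cons_uniq uniq_vuq !inE (negbTE neq_wu) (negbTE wNq) !orbF andbT.
by apply: contraTneq vw => ->; rewrite adj_irr.
Qed.

Lemma no_leaf_edgeless x y : ~~ adj x y.
Proof.
apply/negP => xy.
have walk k : exists v u q, [/\ size q = k, uniq [:: v, u & q] & path adj v (u :: q)].
  elim: k => [|k [v [u [q [<- uniq_vuq path_vuq]]]]].
    exists y, x, [::]; rewrite /= adj_sym xy inE andbT; split=> //.
    by apply: contraTneq xy => ->; rewrite adj_irr.
  have [w /andP [uniq_w path_w]] := walk_extend uniq_vuq path_vuq.
  by exists w, v, (u :: q).
have [v [u [q [size_q uniq_vuq _]]]] := walk #|T|.
have := max_card (mem [:: v, u & q]).
by rewrite (card_uniqP uniq_vuq) /= size_q ltnNge leqnSn.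
Qed.

End NoLeafCycle.

Section ForestKernel.
Variables (R : nzRingType) (n : nat) (e : rel 'I_n.+1) (U : rel 'I_n.+1).
Hypotheses (U_sym : symmetric U) (U_forest : is_forest U).

Lemma incidence_kernel_forest (z : 'I_n.+1 * 'I_n.+1 -> R) :
  edge_supported e z -> (forall a c, z (a, c) != 0 -> U a c) ->
  (forall u, \sum_p incidence e u p * z p = 0) -> forall p, z p = 0.
Proof.
move=> supp_z zU Bz; pose adj v w := (z (v, w) != 0) || (z (w, v) != 0).
have adj_sym : symmetric adj by move=> v w; rewrite /adj orbC.
have adj_irr : irreflexive adj.
  by move=> v; rewrite /adj orbb; apply/negbTE/negP => /supp_z; rewrite ltnn.
have adj_forest : is_forest adj.
  by apply: sub_forest U_forest => v w /orP [/zU // | /zU]; rewrite U_sym.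
have z_asym v w : z (v, w) != 0 -> z (w, v) = 0.
  move=> /supp_z /andP [lt_vw _]; apply/eqP; apply: contraTT lt_vw.
  by move=> /supp_z /andP [lt_wv _]; rewrite -leqNgt ltnW.
(* Conservation at a vertex with a single incident support edge would force the
   flow on that edge to vanish. *)
have no_leaf u w : adj u w -> exists2 w', w' != w & adj u w'.
  move=> uw; apply/exists_inP; apply: contraTT uw => /exists_inPn leaf.
  have z_leaf (c : 'I_n.+1) : c != w -> z (u, c) = 0 /\ z (c, u) = 0.
    by move=> /leaf; rewrite /adj negb_or => /andP [/negPn/eqP -> /negPn/eqP ->].
  have := Bz u; rewrite incidence_mul_sum // (bigD1 w) //= [X in _ - X](bigD1 w) //=.
  rewrite !big1 ?addr0 => [/eqP| c /z_leaf [] // | c /z_leaf [] //].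
  rewrite subr_eq0 /adj => /eqP eq_z; rewrite negb_or !negbK.
  have [zuw | nz_uw] := eqVneq (z (u, w)) 0; first by rewrite -eq_z zuw eqxx.
  by move: (z_asym _ _ nz_uw); rewrite -eq_z => zuw; rewrite zuw eqxx in nz_uw.
move=> [a c]; apply/eqP.
apply: contraNT (no_leaf_edgeless adj_sym adj_irr no_leaf adj_forest a c).
by rewrite /adj => ->.
Qed.

End ForestKernel.

Lemma dag_asym (T : finType) (C : {set T * T}) a c :
  is_dag C -> (a, c) \in C -> (c, a) \notin C.
Proof.
move=> dag; have [<- | neq_ac] := eqVneq a c => ac; apply/negP => ca.
  by have := dag [:: a]; rewrite /= /dir_rel ac => /(_ isT isT).
by have := dag [:: a; c]; rewrite /= /dir_rel ac ca !inE neq_ac => /(_ isT isT).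
Qed.

Section EdgeSet.
Variables (n : nat) (e : rel 'I_n.+1) (C : {set 'I_n.+1 * 'I_n.+1}).
Hypotheses (e_sym : symmetric e) (C_edges : forall p, p \in C -> e p.1 p.2).

Definition edge_set : {set 'I_n.+1 * 'I_n.+1} :=
  [set p : 'I_n.+1 * 'I_n.+1 | (p.1 < p.2)%N && underlying_rel C p.1 p.2].

Lemma underlying_edge a c : underlying_rel C a c -> e a c.
Proof. by case/orP => [/C_edges // | /C_edges /=]; rewrite e_sym. Qed.

Lemma free_cols_edge_set (F : fieldType) (r : 'I_n.+1) :
  is_forest (underlying_rel C) ->
  free_cols (fun i p => incidence e (lift r i) p : F) edge_set.
Proof.
move=> forest z zS Bz.
have supp_z a c : z (a, c) != 0 -> (a < c)%N && underlying_rel C a c.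
  move=> nz; suff : (a, c) \in edge_set by rewrite inE.
  by apply: contraNT nz => /zS ->.
apply: (incidence_kernel_forest (e := e) (U := underlying_rel C)) => //.
- by move=> a c; rewrite /underlying_rel orbC.
- by move=> a c /supp_z /andP [-> /underlying_edge ->].
- by move=> a c /supp_z /andP [].
- exact: reduced_incidence_kernel.
Qed.

End EdgeSet.

Section FlowVector.
Variables (R : numDomainType) (n : nat) (e : rel 'I_n.+1).
Variables (C : {set 'I_n.+1 * 'I_n.+1}) (x : 'I_n.+1 -> 'I_n.+1 -> R).
Hypotheses (e_sym : symmetric e) (e_irr : irreflexive e).
Hypothesis C_edges : forall p, p \in C -> e p.1 p.2.

(* The net flow along the edge {a, c} in the direction a -> c, stored at the
   pair (a, c) with a < c, i.e. at the column of the incidence matrix. *)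
Definition flow_vector (p : 'I_n.+1 * 'I_n.+1) : R :=
  if (p.1 < p.2)%N then (p \in C)%:R * x p.1 p.2 - ((p.2, p.1) \in C)%:R * x p.2 p.1
  else 0.

Lemma flow_vector_edge_set p : flow_vector p != 0 -> p \in edge_set C.
Proof.
case: p => a c; rewrite /flow_vector /edge_set inE /=.
case: ifP => _; last by rewrite eqxx.
by rewrite /underlying_rel; case: ((a, c) \in C); case: ((c, a) \in C);
  rewrite /= ?mul0r ?subrr ?eqxx.
Qed.

Lemma flow_vector_notin (S : {set 'I_n.+1 * 'I_n.+1}) p :
  edge_set C \subset S -> p \notin S -> flow_vector p = 0.
Proof. by move=> sub_CS; apply: contraNeq => /flow_vector_edge_set /(subsetP sub_CS). Qed.

Lemma flow_vector_edge_supported : edge_supported e flow_vector.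
Proof.
move=> a c /flow_vector_edge_set; rewrite inE => /andP [lt_ac uac].
by rewrite lt_ac (underlying_edge e_sym C_edges uac).
Qed.

Lemma flow_vector_sub_swap u c : flow_vector (u, c) - flow_vector (c, u) =
  ((u, c) \in C)%:R * x u c - ((c, u) \in C)%:R * x c u.
Proof.
rewrite /flow_vector /=; case: (ltngtP u c) => [_|_|/val_inj <-].
- by rewrite subr0.
- by rewrite sub0r opprB.
- have -> : (u, u) \in C = false by apply/negP => /C_edges; rewrite /= e_irr.
  by rewrite mul0r subrr.
Qed.

Lemma incidence_flow_vector u :
  \sum_p incidence e u p * flow_vector p =
  \sum_(c | (u, c) \in C) x u c - \sum_(c | (c, u) \in C) x c u.
Proof.
rewrite incidence_mul_sum; last exact: flow_vector_edge_supported.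
rewrite -sumrB; under eq_bigr do rewrite flow_vector_sub_swap.
by rewrite sumrB; congr (_ - _); rewrite [RHS]big_mkcond; apply: eq_bigr => c _;
  case: (_ \in C); rewrite ?mul1r ?mul0r.
Qed.

Hypotheses (dag : is_dag C) (x_pos : forall a c, (a, c) \in C -> 0 < x a c).

Lemma mem_flow_vector a c : ((a, c) \in C) =
  ((a < c)%N && (0 < flow_vector (a, c))) || ((c < a)%N && (flow_vector (c, a) < 0)).
Proof.
rewrite /flow_vector /=.
have [ac | nac] := boolP ((a, c) \in C).
  have xac := x_pos ac; rewrite (negbTE (dag_asym dag ac)) !mul0r subr0 sub0r mul1r.
  case: (ltngtP a c) => [_ | _ | /val_inj eq_ac] /=; rewrite ?xac ?oppr_lt0 //.
  by move: (dag_asym dag ac); rewrite eq_ac in ac *; rewrite ac.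
have [ca | nca] := boolP ((c, a) \in C).
  have xca := x_pos ca; rewrite !mul0r !mul1r sub0r subr0.
  by case: (ltngtP a c) => _ /=; rewrite ?oppr_gt0 ?(lt_gtF xca) ?orbF.
by rewrite !mul0r subrr !if_same ltxx !andbF.
Qed.

End FlowVector.

Lemma card_neq0_le_sum_sqr (I : finType) (P : pred I) (F : I -> int) :
  (#|[pred i | P i & F i != 0]|)%:Z <= \sum_(i | P i) F i ^+ 2.
Proof.
rewrite (bigID (fun i => F i != 0)) /= -[_%:Z]addr0.
rewrite lerD ?sumr_ge0 // => [|i _]; last exact: sqr_ge0.
rewrite -sum1_card -natz natr_sum (eq_bigl (fun i => P i && (F i != 0))) //.
by apply: ler_sum => i /andP [_]; apply: sqr_intr_ge1.
Qed.

Section FeasibleConfigurations.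
Variables (R : realFieldType) (n : nat) (e : rel 'I_n.+1).
Variables (g d : 'I_n.+1 -> R) (xbar : 'I_n.+1 -> 'I_n.+1 -> R) (r : 'I_n.+1).
Hypotheses (e_sym : symmetric e) (e_irr : irreflexive e).
Hypothesis e_conn : forall x y, connect e x y.

Definition incidence_basis (S : {set 'I_n.+1 * 'I_n.+1}) : bool :=
  (#|S| == n) && (col_minor (r, r) (fun i p => incidence e (lift r i) p : int) S != 0).

Lemma incidence_basisP S : incidence_basis S <->
  #|S| = n /\ free_cols (fun i p => incidence e (lift r i) p : R) S.
Proof.
have minorE : col_minor (r, r) (fun i p => incidence e (lift r i) p : R) S =
              (col_minor (r, r) (fun i p => incidence e (lift r i) p : int) S)%:~R.
  by apply: col_minor_map => i p; rewrite incidence_map.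
rewrite /incidence_basis -(intr_eq0 R) -minorE; split => [/andP [/eqP cardS minorS]|].
  by split=> //; apply/(free_cols_minor _ (r, r) cardS).
by case=> cardS /(free_cols_minor _ (r, r) cardS) minorS; rewrite cardS eqxx.
Qed.

Lemma incidence_flow_balance (C : {set 'I_n.+1 * 'I_n.+1}) (x : 'I_n.+1 -> 'I_n.+1 -> R) :
  (forall p, p \in C -> e p.1 p.2) ->
  (forall k, \sum_(j | (j, k) \in C) x j k - \sum_(j | (k, j) \in C) x k j = g k - d k) ->
  forall u, \sum_p incidence e u p * flow_vector C x p = d u - g u.
Proof. by move=> C_edges cons u; rewrite incidence_flow_vector // -opprB cons opprB. Qed.

Lemma feasible_config_basis C : feasible_config e g d xbar C ->
  exists2 S, incidence_basis S & edge_set C \subset S.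
Proof.
case=> C_edges [_ forest] _.
have [S sub_CS [cardS freeS]] :=
  free_cols_extend (reduced_incidence_row_free (r := r) e_sym e_conn)
                   (free_cols_edge_set (F := R) (r := r) e_sym C_edges forest).
by exists S => //; apply/incidence_basisP.
Qed.

Lemma feasible_config_unique C1 C2 S :
  feasible_config e g d xbar C1 -> feasible_config e g d xbar C2 -> incidence_basis S ->
  edge_set C1 \subset S -> edge_set C2 \subset S -> C1 = C2.
Proof.
move=> [C1_edges [dag1 _] [x1 [x1_bnd cons1]]] [C2_edges [dag2 _] [x2 [x2_bnd cons2]]].
move=> /incidence_basisP [_ freeS] sub1 sub2.
have y12 : flow_vector C1 x1 =1 flow_vector C2 x2.
  apply: (free_cols_eq freeS) => [p | p | i]; try exact: flow_vector_notin.
  by rewrite !incidence_flow_balance.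
apply/setP => -[a c].
rewrite (mem_flow_vector dag1 (fun a c ac => (x1_bnd a c ac).1)) !y12.
by rewrite -(mem_flow_vector dag2 (fun a c ac => (x2_bnd a c ac).1)).
Qed.

End FeasibleConfigurations.

Theorem lemma1 (R : realFieldType) (n : nat) (e : rel 'I_n.+1)
  (Vg : {set 'I_n.+1}) (g d : 'I_n.+1 -> R) (xbar : 'I_n.+1 -> 'I_n.+1 -> R)
  (e_sym : symmetric e) (e_irr : irreflexive e)
  (e_conn : forall x y, connect e x y)
  (g_pos : forall i, i \in Vg -> 0 < g i)
  (g_zero : forall i, i \notin Vg -> g i = 0)
  (d_pos : forall j, j \notin Vg -> 0 < d j)
  (d_zero : forall j, j \in Vg -> d j = 0)
  (balance : \sum_i g i = \sum_j d j)
  (xbar_ge0 : forall i j, e i j -> 0 <= xbar i j)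
  (r : 'I_n.+1) :
  (#|feasible_configs e g d xbar|)%:Z <= \det (laplacian_cofactor e r).
Proof.
have -> : laplacian_cofactor e r =
    \matrix_(i, j) \sum_p incidence e (lift r i) p * incidence e (lift r j) p.
  apply/matrixP => i j.
  by rewrite [RHS]mxE (incidence_gram e_sym e_irr) /laplacian_cofactor !mxE.
rewrite (cauchy_binet_gram (r, r)); apply: le_trans (card_neq0_le_sum_sqr _ _).
rewrite lez_nat; set CF := feasible_configs e g d xbar.
have feasibleP C : C \in CF -> feasible_config e g d xbar C by rewrite inE => /asboolP.
pose basis_of C := odflt set0 [pick S | incidence_basis e r S && (edge_set C \subset S)].
have basis_ofP C :
    C \in CF -> incidence_basis e r (basis_of C) && (edge_set C \subset basis_of C).
  move=> /feasibleP /(feasible_config_basis r e_sym e_conn) [S basisS subS].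
  by rewrite /basis_of; case: pickP => [//|/(_ S)]; rewrite basisS subS.
rewrite -(card_in_imset (f := basis_of) (D := CF)) => [|C1 C2 C1F C2F eq_basis].
  apply: subset_leq_card; apply/subsetP => _ /imsetP [C CF_C ->].
  by rewrite inE; case/andP: (basis_ofP C CF_C).
have /andP [basis1 sub1] := basis_ofP C1 C1F; have /andP [_ sub2] := basis_ofP C2 C2F.
apply: (feasible_config_unique e_sym e_irr (feasibleP _ C1F) (feasibleP _ C2F) basis1 sub1).
by rewrite eq_basis.
Qed.
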